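(* Let $\mathcal{X},\mathcal{Y}$ be finite sets and $P$ a joint probability mass function on $\mathcal{X}\times\mathcal{Y}$ with $P(x,y)>0$ for all $(x,y)$. For every conditional guessing function $G(\cdot|\cdot)$, every $\rho>0$ and every $q\in\mathbb{R}$, $$ E_q[G(X|Y)^\rho]\;\geq\;(1+\ln|\mathcal{X}|)^{-\rho}\,\frac{\sum_{y\in\mathcal{Y}}\left[\sum_{x\in\mathcal{X}}P(x,y)^{\frac{q}{1+\rho}}\right]^{1+\rho}}{\sum_{y\in\mathcal{Y}}\sum_{x\in\mathcal{X}}P(x,y)^q}. $$
   Context: A conditional guessing function is a map $G(\cdot|\cdot)$ on $\mathcal{X}\times\mathcal{Y}$ such that for each $y\in\mathcal{Y}$, $x\mapsto G(x|y)$ is a bijection from $\mathcal{X}$ onto $\{1,\dots,|\mathcal{X}|\}$. For $q\in\mathbb{R}$ and a function $F$ on $\mathcal{X}\times\mathcal{Y}$, the $q$-normalized expectation under $P$ is $E_q[F(X,Y)]=\frac{\sum_{x,y}F(x,y)P(x,y)^q}{\sum_{x,y}P(x,y)^q}$. *)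

From mathcomp Require Import all_boot.
From Stdlib Require Import Reals.

Set Implicit Arguments.
Unset Strict Implicit.

Open Scope R_scope.

Definition sumR (T : finType) (f : T -> R) : R :=
  List.fold_right Rplus 0 (List.map f (enum T)).

Definition is_cond_guessing (X Y : finType) (G : X -> Y -> nat) : Prop :=
  forall y : Y,
    (forall x : X, (1 <= G x y)%coq_nat /\ (G x y <= #|X|)%coq_nat) /\
    (forall x1 x2 : X, G x1 y = G x2 y -> x1 = x2) /\
    (forall k : nat, (1 <= k)%coq_nat -> (k <= #|X|)%coq_nat ->
       exists x : X, G x y = k).

Definition Eq_norm (X Y : finType) (P : X -> Y -> R) (q : R)
    (F : X -> Y -> R) : R :=
  sumR (fun x => sumR (fun y => F x y * Rpower (P x y) q)) /
  sumR (fun x => sumR (fun y => Rpower (P x y) q)).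

(* Fix y and put c_x = P(x,y)^(q/(1+rho)) and g_x = G(x|y).  Hölder's inequality,
   in the form
       (sum_x c_x)^(1+rho) * (sum_x 1/g_x)^(-rho) <= sum_x g_x^rho * c_x^(1+rho),
   bounds the y-slice of the numerator of E_q[G^rho] from below; we prove it from
   the tangent-line bound for the convex map t |-> t^(1+rho).  Because x |-> G(x|y)
   is a bijection onto {1, ..., |X|}, sum_x 1/g_x is the harmonic number H_|X|,
   and H_n <= 1 + ln n.  Summing the slice bounds over y and dividing by the
   normalizing sum (the same double sum with the order of summation exchanged)
   gives the theorem. *)

From mathcomp Require Import all_boot zify.
From Stdlib Require Import Reals Lra Lia.
Open Scope R_scope.

(* ln x <= x - 1: the tangent line of ln at 1 lies above its graph. *)
Lemma ln_le_sub1 x : 0 < x -> ln x <= x - 1.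
Proof. by move=> x_gt0; have := exp_ineq1_le (ln x); rewrite exp_ln //; lra. Qed.

Lemma Rpower_bernoulli x r : 0 < x -> 1 <= r -> 1 + r * (x - 1) <= Rpower x r.
Proof.
move=> x_gt0 r_ge1.
have x_ln_x : x - 1 <= x * ln x.
  have := ln_le_sub1 (/ x) (Rinv_0_lt_compat _ x_gt0); rewrite ln_Rinv // => h.
  have : x * (- ln x) <= x * (/ x - 1) by apply: Rmult_le_compat_l; lra.
  rewrite Rmult_minus_distr_l Rinv_r; lra.
have exp_tangent : x * (1 + (r - 1) * ln x) <= x * exp ((r - 1) * ln x).
  by apply: Rmult_le_compat_l; [lra | exact: exp_ineq1_le].
have -> : r = 1 + (r - 1) by ring.
rewrite Rpower_plus Rpower_1 // /Rpower; nra.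
Qed.

Lemma Rpower_tangent m t p : 0 < m -> 0 < t -> 1 <= p ->
  Rpower m p + p * Rpower m (p - 1) * (t - m) <= Rpower t p.
Proof.
move=> m_gt0 t_gt0 p_ge1.
have tm_gt0 : 0 < t / m by apply: Rdiv_lt_0_compat.
have mp1_gt0 : 0 < Rpower m (p - 1) by apply: exp_pos.
have m_pow : Rpower m p = Rpower m (p - 1) * m.
  by rewrite -[X in _ = _ * X](Rpower_1 m) // -Rpower_plus; f_equal; ring.
have t_pow : Rpower t p = Rpower m (p - 1) * m * Rpower (t / m) p.
  rewrite -m_pow Rpower_mult_distr //; f_equal; field; lra.
have := Rpower_bernoulli (t / m) p tm_gt0 p_ge1.
have := Rmult_lt_0_compat _ _ mp1_gt0 m_gt0.
rewrite t_pow m_pow => c_gt0 bern.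
have -> : Rpower m (p - 1) * m + p * Rpower m (p - 1) * (t - m) =
          Rpower m (p - 1) * m * (1 + p * (t / m - 1)) by field; lra.
by apply: Rmult_le_compat_l; lra.
Qed.

Definition lsum {A : Type} (l : seq A) (f : A -> R) : R :=
  List.fold_right Rplus 0 (List.map f l).

Lemma lsum_nil {A : Type} (f : A -> R) : lsum [::] f = 0.
Proof. by []. Qed.

Lemma lsum_cons {A : Type} (a : A) (l : seq A) (f : A -> R) :
  lsum (a :: l) f = f a + lsum l f.
Proof. by []. Qed.

Lemma lsum_cat {A : Type} (l1 l2 : seq A) (f : A -> R) :
  lsum (l1 ++ l2) f = lsum l1 f + lsum l2 f.
Proof.
elim: l1 => [|a l IH]; first by rewrite lsum_nil Rplus_0_l.
by rewrite cat_cons !lsum_cons IH Rplus_assoc.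
Qed.

Lemma lsum_map {A B : Type} (h : A -> B) (l : seq A) (f : B -> R) :
  lsum (map h l) f = lsum l (fun x => f (h x)).
Proof. by elim: l => [|a l IH] //; rewrite map_cons !lsum_cons IH. Qed.

Lemma lsum_ext {A : Type} (l : seq A) (f g : A -> R) :
  f =1 g -> lsum l f = lsum l g.
Proof. by move=> efg; elim: l => [|a l IH] //; rewrite !lsum_cons IH efg. Qed.

Lemma lsum0 {A : Type} (l : seq A) : lsum l (fun=> 0) = 0.
Proof. by elim: l => [|a l IH] //; rewrite lsum_cons IH Rplus_0_l. Qed.

Lemma lsum_add {A : Type} (l : seq A) (f g : A -> R) :
  lsum l (fun x => f x + g x) = lsum l f + lsum l g.
Proof. by elim: l => [|a l IH]; rewrite ?lsum_cons ?IH /lsum /=; ring. Qed.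

Lemma lsum_scale {A : Type} (l : seq A) (a : R) (f : A -> R) :
  lsum l (fun x => a * f x) = a * lsum l f.
Proof. by elim: l => [|b l IH]; rewrite ?lsum_cons ?IH /lsum /=; ring. Qed.

Lemma lsum_le {A : Type} (l : seq A) (f g : A -> R) :
  (forall x, f x <= g x) -> lsum l f <= lsum l g.
Proof.
move=> lefg; elim: l => [|a l IH]; first by right.
by rewrite !lsum_cons; have := lefg a; lra.
Qed.

Lemma lsum_gt0 {A : Type} (l : seq A) (f : A -> R) :
  l <> [::] -> (forall x, 0 < f x) -> 0 < lsum l f.
Proof.
move=> l_neq0 f_gt0; case: l l_neq0 => [|a l] // _.
have : 0 <= lsum l f by rewrite -(lsum0 l); apply: lsum_le => x; apply: Rlt_le.
by rewrite lsum_cons; have := f_gt0 a; lra.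
Qed.

Lemma lsum_exchange {A B : Type} (l : seq A) (l' : seq B) (f : A -> B -> R) :
  lsum l (fun x => lsum l' (f x)) = lsum l' (fun y => lsum l (fun x => f x y)).
Proof.
elim: l => [|a l IH]; first by rewrite lsum_nil -(lsum0 l').
by rewrite lsum_cons IH -lsum_add.
Qed.

Lemma lsum_perm {A : eqType} (l1 l2 : seq A) (f : A -> R) :
  perm_eq l1 l2 -> lsum l1 f = lsum l2 f.
Proof.
by apply/catCA_perm_subst: l1 l2 => l1 l2 l3 /=; rewrite !lsum_cat; ring.
Qed.

(* Hölder's inequality with exponents (1 + rho, (1 + rho) / rho), written as a
   lower bound for the weighted moment sum_x g_x^rho c_x^(1+rho).  Proof: apply
   the tangent bound for t^(1+rho) at m = (sum c) / (sum 1/g) to t = g_x c_x,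
   divide by g_x and sum; the linear terms collapse to m^(1+rho) * sum 1/g. *)
Lemma holder_moment_bound {A : Type} (l : seq A) (c g : A -> R) (rho : R) :
  l <> [::] -> (forall x, 0 < c x) -> (forall x, 0 < g x) -> 0 < rho ->
  Rpower (lsum l c) (1 + rho) * Rpower (lsum l (fun x => / g x)) (- rho) <=
  lsum l (fun x => Rpower (g x) rho * Rpower (c x) (1 + rho)).
Proof.
move=> l_neq0 c_gt0 g_gt0 rho_gt0.
set p := 1 + rho; have p_ge1 : 1 <= p by rewrite /p; lra.
set H := lsum l (fun x => / g x); set S := lsum l c.
have H_gt0 : 0 < H by apply: lsum_gt0 => // x; apply: Rinv_0_lt_compat.
have S_gt0 : 0 < S by apply: lsum_gt0.
set m := S / H; have m_gt0 : 0 < m by apply: Rdiv_lt_0_compat.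
set slope := p * Rpower m rho.
have pointwise x : (Rpower m p - slope * m) * / g x + slope * c x <=
                   Rpower (g x) rho * Rpower (c x) p.
  have gx_gt0 := g_gt0 x; have cx_gt0 := c_gt0 x.
  have tangent := Rpower_tangent m (g x * c x) p m_gt0
                    (Rmult_lt_0_compat _ _ gx_gt0 cx_gt0) p_ge1.
  have -> : Rpower (g x) rho * Rpower (c x) p = / g x * Rpower (g x * c x) p.
    rewrite -Rpower_mult_distr // /p (Rpower_plus 1 rho (g x)) Rpower_1 //.
    field; lra.
  have -> : (Rpower m p - slope * m) * / g x + slope * c x =
            / g x * (Rpower m p + slope * (g x * c x - m)).
    by rewrite /slope; field; lra.
  apply: Rmult_le_compat_l; first by apply/Rlt_le/Rinv_0_lt_compat.
  by move: tangent; have -> : p - 1 = rho by rewrite /p; ring.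
apply: Rle_trans (lsum_le l _ _ pointwise).
rewrite lsum_add !lsum_scale -/H -/S.
have -> : (Rpower m p - slope * m) * H + slope * S = Rpower m p * H
  by rewrite /m; field; lra.
rewrite /m /Rdiv -Rpower_mult_distr //; last by apply: Rinv_0_lt_compat.
have -> : Rpower (/ H) p = / Rpower H p.
  by rewrite /Rpower ln_Rinv // -exp_Ropp; f_equal; ring.
have Hrho_gt0 : 0 < Rpower H rho by apply: exp_pos.
rewrite Rpower_Ropp /p !Rpower_plus !Rpower_1 //; right; field; lra.
Qed.

Definition harmonic (n : nat) : R := lsum (iota 1 n) (fun k => / INR k).

(* H_n <= 1 + ln n, since 1/(k+1) <= ln (k+1) - ln k. *)
Lemma harmonic_le_1_ln (n : nat) : (0 < n)%nat -> harmonic n <= 1 + ln (INR n).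
Proof.
elim: n => [|[|n] IH] // _.
  by rewrite /harmonic lsum_cons lsum_nil /= ln_1 Rinv_1; lra.
have n1_gt0 : 0 < INR n.+1 by apply: lt_0_INR; lia.
have n2_eq : INR n.+2 = INR n.+1 + 1 by rewrite (S_INR n.+1).
have n2_gt0 : 0 < INR n.+2 by lra.
have inv_le_ln_ratio : / INR n.+2 <= ln (INR n.+2) - ln (INR n.+1).
  have := ln_le_sub1 _ (Rdiv_lt_0_compat _ _ n1_gt0 n2_gt0).
  rewrite /Rdiv ln_mult ?ln_Rinv //; last exact: Rinv_0_lt_compat.
  have : INR n.+1 * / INR n.+2 - 1 = - / INR n.+2 by rewrite n2_eq; field; lra.
  lra.
rewrite /harmonic -[n.+2]addn1 iotaD lsum_cat -/(harmonic n.+1) lsum_cons lsum_nil.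
by have := IH isT; rewrite add1n addn1; lra.
Qed.

Lemma guessing_perm_iota {X Y : finType} (G : X -> Y -> nat) (y : Y) :
  is_cond_guessing G -> perm_eq (map (G^~ y) (enum X)) (iota 1 #|X|).
Proof.
case/(_ y) => G_range [G_inj G_onto].
apply: uniq_perm.
- by rewrite map_inj_uniq ?enum_uniq // => x1 x2 /G_inj.
- exact: iota_uniq.
- move=> k; rewrite mem_iota; apply/mapP/idP => [[x _ ->] | k_range].
    by have := G_range x; lia.
  have k_ge1 : (1 <= k)%coq_nat by lia.
  have k_le_card : (k <= #|X|)%coq_nat by lia.
  by have [x <-] := G_onto k k_ge1 k_le_card; exists x; rewrite ?mem_enum.
Qed.

Lemma guessing_inverse_sum {X Y : finType} (G : X -> Y -> nat) (y : Y) :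
  is_cond_guessing G -> lsum (enum X) (fun x => / INR (G x y)) = harmonic #|X|.
Proof.
move=> HG; rewrite /harmonic -(lsum_perm _ _ _ (guessing_perm_iota G y HG)).
by rewrite [RHS]lsum_map.
Qed.

(* The y-slice of the theorem: Hölder's inequality with c_x = P(x,y)^(q/(1+rho))
   and g_x = G(x|y), combined with sum_x 1/G(x|y) = H_|X| <= 1 + ln |X|. *)
Lemma guessing_slice_bound {X Y : finType} (P : X -> Y -> R) (G : X -> Y -> nat)
    (rho q : R) (y : Y) :
  enum X <> [::] -> (forall x, 0 < P x y) -> is_cond_guessing G -> 0 < rho ->
  Rpower (1 + ln (INR #|X|)) (- rho) *
    Rpower (sumR (fun x => Rpower (P x y) (q / (1 + rho)))) (1 + rho) <=
  sumR (fun x => Rpower (INR (G x y)) rho * Rpower (P x y) q).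
Proof.
move=> X_nonempty P_gt0 HG rho_gt0.
have G_gt0 x : 0 < INR (G x y).
  by apply: lt_0_INR; have [G_range _] := HG y; have := G_range x; lia.
have card_gt0 : (0 < #|X|)%nat by rewrite cardE; case: (enum X) X_nonempty.
have tilt x : Rpower (Rpower (P x y) (q / (1 + rho))) (1 + rho) = Rpower (P x y) q.
  by rewrite Rpower_mult; f_equal; field; lra.
have harmonic_gt0 : 0 < harmonic #|X|.
  rewrite -(guessing_inverse_sum G y HG).
  by apply: lsum_gt0 => // x; apply: Rinv_0_lt_compat.
have weight_le : Rpower (1 + ln (INR #|X|)) (- rho) <= Rpower (harmonic #|X|) (- rho).
  rewrite !Rpower_Ropp; apply: Rinv_le_contravar; first exact: exp_pos.
  by apply: Rle_Rpower_l; [lra | split; last exact: harmonic_le_1_ln].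
have holder := holder_moment_bound (enum X) (fun x => Rpower (P x y) (q / (1 + rho)))
  (fun x => INR (G x y)) rho X_nonempty (fun x => exp_pos _) G_gt0 rho_gt0.
rewrite (guessing_inverse_sum G y HG) in holder.
rewrite (lsum_ext _ _ _ (fun x => f_equal _ (tilt x))) in holder.
apply: Rle_trans holder; rewrite Rmult_comm.
by apply: Rmult_le_compat_l weight_le; apply/Rlt_le/exp_pos.
Qed.

Lemma sumR_exchange {X Y : finType} (f : X -> Y -> R) :
  sumR (fun x => sumR (f x)) = sumR (fun y => sumR (fun x => f x y)).
Proof. exact: lsum_exchange. Qed.

Lemma mass_support_nonempty {X Y : finType} (P : X -> Y -> R) :
  sumR (fun x => sumR (fun y => P x y)) = 1 -> enum X <> [::] /\ enum Y <> [::].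
Proof.
move=> Psum; split=> empty; move: Psum; rewrite /sumR empty /=; first lra.
by have := lsum0 (enum X); rewrite /lsum => ->; lra.
Qed.

Theorem theorem2 (X Y : finType) (P : X -> Y -> R)
    (Ppos : forall (x : X) (y : Y), 0 < P x y)
    (Psum : sumR (fun x : X => sumR (fun y : Y => P x y)) = 1)
    (G : X -> Y -> nat) (HG : is_cond_guessing G)
    (rho q : R) (Hrho : 0 < rho) :
  Eq_norm P q (fun x y => Rpower (INR (G x y)) rho) >=
  Rpower (1 + ln (INR #|X|)) (- rho) *
  (sumR (fun y : Y =>
           Rpower (sumR (fun x : X => Rpower (P x y) (q / (1 + rho)))) (1 + rho))
   / sumR (fun y : Y => sumR (fun x : X => Rpower (P x y) q))).
Proof.
have [X_nonempty Y_nonempty] := mass_support_nonempty P Psum.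
set D := sumR (fun y => sumR (fun x => Rpower (P x y) q)).
have D_gt0 : 0 < D.
  by apply: lsum_gt0 => // y; apply: lsum_gt0 => // x; apply: exp_pos.
have numerator_bound :
    Rpower (1 + ln (INR #|X|)) (- rho) *
      sumR (fun y => Rpower (sumR (fun x => Rpower (P x y) (q / (1 + rho)))) (1 + rho))
    <= sumR (fun y => sumR (fun x => Rpower (INR (G x y)) rho * Rpower (P x y) q)).
  by rewrite -lsum_scale; apply: lsum_le => y; apply: guessing_slice_bound.
rewrite /Eq_norm.
rewrite (sumR_exchange (fun x y => Rpower (INR (G x y)) rho * Rpower (P x y) q)).
rewrite (sumR_exchange (fun x y => Rpower (P x y) q)) -/D.
apply: Rle_ge; rewrite /Rdiv -Rmult_assoc.
by apply: Rmult_le_compat_r numerator_bound; apply/Rlt_le/Rinv_0_lt_compat.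
Qed.
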